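(* Let $(\Sigma_k^+,d,\sigma)$ be the full one-sided shift on $k\ge 2$ symbols. Then for every $\alpha>0$, $$\widetilde h_{top}(\sigma,\Sigma_k^+)=\log k<(1+\alpha)\log k=h^\alpha_{top}(\sigma,\Sigma_k^+).$$
   Context: $\Sigma_k^+=\{0,\dots,k-1\}^{\mathbb N}$ with points $x=(x_0,x_1,\dots)$, metric $d(x,y)=e^{-n(x,y)}$ where $n(x,y)$ is the first index where $x,y$ disagree ($n(x,x)=\infty$), and $\sigma$ the left shift. For a TDS $(X,d,f)$: $d_n^\alpha(x,y)=\max_{0\le i\le n-1}e^{\alpha i}d(f^ix,f^iy)$; $r_n(f,\alpha,X,\varepsilon)$ is the minimal cardinality of a set $E$ with every $x\in X$ having some $y\in E$ with $d_n^\alpha(x,y)<\varepsilon$; $h^\alpha_{top}(f,X)=\lim_{\varepsilon\to0}\limsup_n\frac1n\log r_n(f,\alpha,X,\varepsilon)$. Neutralized topological entropy: $B_n(x,r)=\{y:d(f^jx,f^jy)<r,\ 0\le j\le n-1\}$; $r_n(X,e^{-n\varepsilon})$ is the smallest number of balls $B_n(x,e^{-n\varepsilon})$ needed to cover $X$; $\widetilde h_{top}(f,X,\varepsilon)=\limsup_{n\to\infty}\frac1n\log r_n(X,e^{-n\varepsilon})$ and $\widetilde h_{top}(f,X)=\lim_{\varepsilon\to0}\widetilde h_{top}(f,X,\varepsilon)$. *)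

From Stdlib Require Import Reals Lra Lia List ClassicalEpsilon Classical Arith.
From Coquelicot Require Import Coquelicot.
Open Scope R_scope.

Lemma least_exists (P : nat -> Prop) :
  (exists n, P n) -> exists n, P n /\ forall m, P m -> (n <= m)%nat.
Proof.
  intros [n Hn].
  revert Hn. induction n as [n IH] using (well_founded_induction lt_wf).
  intros Hn.
  destruct (classic (exists m, (m < n)%nat /\ P m)) as [[m [Hm HPm]] | Hno].
  - exact (IH m Hm HPm).
  - exists n; split; [exact Hn|].
    intros m HPm. destruct (le_lt_dec n m) as [Hle|Hlt]; [exact Hle|].
    exfalso; apply Hno; exists m; auto.
Qed.

(* nat_min P = the least n with P n (0 if there is none). *)
Definition nat_min (P : nat -> Prop) : nat :=
  match excluded_middle_informative (exists n, P n) with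
  | left H => proj1_sig (constructive_indefinite_description _ (least_exists P H))
  | right _ => 0%nat
  end.

Section TDS.
Context {X : Type} (Xs : X -> Prop) (d : X -> X -> R) (f : X -> X).

Fixpoint d_alpha (alpha : R) (n : nat) (x y : X) : R :=
  match n with
  | O => 0
  | S m => Rmax (d_alpha alpha m x y)
                (exp (alpha * INR m) * d (Nat.iter m f x) (Nat.iter m f y))
  end.

Definition alpha_spanning (alpha : R) (n : nat) (eps : R) (E : list X) : Prop :=
  (forall y, In y E -> Xs y) /\
  (forall x, Xs x -> exists y, In y E /\ d_alpha alpha n x y < eps).

Definition r_alpha (alpha : R) (n : nat) (eps : R) : nat :=
  nat_min (fun m => exists E : list X, length E = m /\ alpha_spanning alpha n eps E).

Definition alpha_entropy_eps (alpha eps : R) : Rbar :=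
  LimSup_seq (fun n => / INR n * ln (INR (r_alpha alpha n eps))).

Definition alpha_entropy_is (alpha h : R) : Prop :=
  filterlim (fun eps => alpha_entropy_eps alpha eps) (at_right 0) (Rbar_locally (Finite h)).

Definition bowen_ball (n : nat) (x : X) (r : R) (y : X) : Prop :=
  forall j, (j < n)%nat -> d (Nat.iter j f x) (Nat.iter j f y) < r.

Definition bowen_cover (n : nat) (r : R) (E : list X) : Prop :=
  (forall x, In x E -> Xs x) /\
  (forall y, Xs y -> exists x, In x E /\ bowen_ball n x r y).

Definition r_bowen (n : nat) (r : R) : nat :=
  nat_min (fun m => exists E : list X, length E = m /\ bowen_cover n r E).

Definition neutral_entropy_eps (eps : R) : Rbar :=
  LimSup_seq (fun n => / INR n * ln (INR (r_bowen n (exp (- INR n * eps))))).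

Definition neutral_entropy_is (h : R) : Prop :=
  filterlim neutral_entropy_eps (at_right 0) (Rbar_locally (Finite h)).

End TDS.

Definition Sigma (k : nat) (x : nat -> nat) : Prop := forall i, (x i < k)%nat.

Definition shift (x : nat -> nat) : nat -> nat := fun i => x (S i).

Definition dshift (x y : nat -> nat) : R :=
  match excluded_middle_informative (exists n, x n <> y n) with
  | left _ => exp (- INR (nat_min (fun n => x n <> y n)))
  | right _ => 0
  end.

(* Closeness in d_n^alpha or in a
   Bowen ball is agreement of the two sequences on an initial block, and the minimal
   number of centres needed to cover Sigma_k^+ by such cylinders of length L is k^L.
   For a Bowen ball B_n(x, e^{-n eps}) the block has length about n + n eps, giving
   (1 + eps) log k, which tends to log k as eps -> 0.  For d_n^alpha < eps the weight
   e^{alpha i} forces agreement up to about n + alpha n - log eps, giving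
   (1 + alpha) log k for every eps. *)
From Stdlib Require Import Reals Lra Lia List ClassicalEpsilon.
From Coquelicot Require Import Coquelicot.
Open Scope R_scope.

Lemma nat_min_spec (P : nat -> Prop) : (exists n, P n) ->
  P (nat_min P) /\ forall m, P m -> (nat_min P <= m)%nat.
Proof.
  intros H. unfold nat_min.
  destruct (excluded_middle_informative _) as [Hex|Hnone]; [|contradiction].
  destruct (constructive_indefinite_description _ _) as [n Hn]; exact Hn.
Qed.

Lemma nat_min_eq (P : nat -> Prop) (n : nat) :
  P n -> (forall m, P m -> (n <= m)%nat) -> nat_min P = n.
Proof.
  intros Hn Hle. destruct (nat_min_spec P (ex_intro _ n Hn)) as [Hmin Hmin_le].
  specialize (Hmin_le n Hn). specialize (Hle _ Hmin). lia.
Qed.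

Definition agree (L : nat) (x y : nat -> nat) : Prop :=
  forall i, (i < L)%nat -> x i = y i.

Lemma agree_sym (L : nat) (x y : nat -> nat) : agree L x y -> agree L y x.
Proof. intros H i Hi. symmetry. auto. Qed.

Lemma Sigma_shift (k : nat) (x : nat -> nat) : Sigma k x -> Sigma k (shift x).
Proof. intros Hx i. apply Hx. Qed.

(* The first L symbols of x read as a base-k numeral, least significant digit first. *)
Fixpoint word_index (k L : nat) (x : nat -> nat) : nat :=
  match L with
  | O => O
  | S L' => (x O + k * word_index k L' (shift x))%nat
  end.

Lemma word_index_lt (k L : nat) (x : nat -> nat) :
  Sigma k x -> (word_index k L x < k ^ L)%nat.
Proof.
  revert x; induction L as [|L IH]; intros x Hx; simpl; [lia|].
  specialize (IH _ (Sigma_shift k x Hx)). specialize (Hx O). nia.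
Qed.

Lemma word_index_agree (k L : nat) (x y : nat -> nat) :
  agree L x y -> word_index k L x = word_index k L y.
Proof.
  revert x y; induction L as [|L IH]; intros x y H; simpl; auto.
  rewrite (H O) by lia. do 2 f_equal.
  apply IH. intros i Hi. apply H. lia.
Qed.

Lemma agree_of_word_index (k L : nat) (x y : nat -> nat) :
  Sigma k x -> Sigma k y -> word_index k L x = word_index k L y -> agree L x y.
Proof.
  revert x y; induction L as [|L IH]; intros x y Hx Hy He i Hi; [lia|].
  simpl in He. pose proof (Hx O). pose proof (Hy O).
  set (a := word_index k L (shift x)) in *. set (b := word_index k L (shift y)) in *.
  assert (Hab : a = b).
  { destruct (Nat.lt_total a b) as [Hlt|[Heq|Hgt]]; auto.
    - assert (k * b >= k * a + k)%nat by nia. lia.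
    - assert (k * a >= k * b + k)%nat by nia. lia. }
  destruct i as [|i]; [lia|].
  apply (IH (shift x) (shift y)); auto using Sigma_shift; lia.
Qed.

Lemma word_index_surj (k L c : nat) : (1 <= k)%nat -> (c < k ^ L)%nat ->
  exists z, Sigma k z /\ word_index k L z = c.
Proof.
  intros hk. revert c; induction L as [|L IH]; intros c Hc.
  - exists (fun _ => O). split; [intro; lia|]. simpl in *. lia.
  - simpl in Hc.
    assert (Hq : (c / k < k ^ L)%nat) by (apply Nat.Div0.div_lt_upper_bound; lia).
    destruct (IH _ Hq) as [z [Hz Hzc]].
    exists (fun i => match i with O => (c mod k)%nat | S j => z j end). split.
    + intros [|i]; [apply Nat.mod_upper_bound; lia | apply Hz].
    + simpl. unfold shift at 1. change (word_index k L (fun i => z i)) with (word_index k L z).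
      rewrite Hzc. pose proof (Nat.div_mod_eq c k). lia.
Qed.

Lemma exists_list_with_word_indices (k L m : nat) : (1 <= k)%nat -> (m <= k ^ L)%nat ->
  exists E : list (nat -> nat), length E = m /\ (forall y, In y E -> Sigma k y) /\
    forall c, (c < m)%nat -> exists y, In y E /\ word_index k L y = c.
Proof.
  intros hk. induction m as [|m IH]; intros Hm.
  - exists nil. repeat split; simpl; intros; [contradiction | lia].
  - destruct IH as [E [HE_len [HE_Sigma HE_idx]]]; [lia|].
    destruct (word_index_surj k L m hk) as [z [Hz Hzm]]; [lia|].
    exists (z :: E). repeat split; simpl; [lia | intros y [<-|Hy]; auto |].
    intros c Hc. destruct (Nat.eq_dec c m) as [->|Hne]; [exists z; auto|].
    destruct (HE_idx c) as [y [Hy Hyc]]; [lia|]. exists y; auto.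
Qed.

Definition cylinder_cover (k L : nat) (E : list (nat -> nat)) : Prop :=
  (forall y, In y E -> Sigma k y) /\
  (forall x, Sigma k x -> exists y, In y E /\ agree L x y).

Lemma min_cylinder_cover_card (k L : nat) (P : list (nat -> nat) -> Prop) :
  (1 <= k)%nat -> (forall E, P E <-> cylinder_cover k L E) ->
  nat_min (fun m => exists E, length E = m /\ P E) = (k ^ L)%nat.
Proof.
  intros hk HP. apply nat_min_eq.
  - destruct (exists_list_with_word_indices k L (k ^ L) hk (le_n _))
      as [E [HE_len [HE_Sigma HE_idx]]].
    exists E. split; [exact HE_len|]. apply HP. split; [exact HE_Sigma|].
    intros x Hx. destruct (HE_idx (word_index k L x)) as [y [Hy Hyx]];
      [apply word_index_lt; auto|].
    exists y. split; [exact Hy|]. apply (agree_of_word_index k); auto.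
  - intros m [E [<- HE]]. apply HP in HE. destruct HE as [_ HE_cover].
    rewrite <- (length_seq (k ^ L) 0), <- (length_map (word_index k L) E).
    apply NoDup_incl_length; [apply seq_NoDup|].
    intros c Hc. apply in_seq in Hc.
    destruct (word_index_surj k L c hk) as [z [Hz <-]]; [lia|].
    destruct (HE_cover z Hz) as [y [Hy Hzy]].
    apply in_map_iff. exists y. split; [|exact Hy].
    symmetry. apply word_index_agree. exact Hzy.
Qed.

(** * Balls of the shift metric are cylinders *)

Definition nat_above (r : R) : nat := nat_min (fun m => r < INR m).

Lemma nat_above_le_iff (r : R) (m : nat) : r < INR m <-> (nat_above r <= m)%nat.
Proof.
  destruct (INR_unbounded r) as [n Hn].
  destruct (nat_min_spec (fun m => r < INR m)) as [Habove Hle]; [exists n; lra|].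
  split; [apply Hle|]. intros H. apply le_INR in H. unfold nat_above in H. lra.
Qed.

Lemma nat_above_gt (r : R) : r < INR (nat_above r).
Proof. apply nat_above_le_iff. lia. Qed.

Lemma nat_above_pos (r : R) : 0 <= r -> (1 <= nat_above r)%nat.
Proof.
  intros Hr. pose proof (nat_above_gt r) as Habove.
  destruct (nat_above r); simpl in Habove; lra || lia.
Qed.

Lemma nat_above_bounds (r : R) : 0 <= r -> r < INR (nat_above r) <= r + 1.
Proof.
  intros Hr. split; [apply nat_above_gt|].
  destruct (Rle_or_lt (INR (nat_above r)) (r + 1)) as [H|H]; [exact H|].
  pose proof (nat_above_pos r Hr).
  assert (Hpred : r < INR (nat_above r - 1)) by (rewrite minus_INR by lia; simpl; lra).
  apply nat_above_le_iff in Hpred. lia.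
Qed.

Lemma nat_above_le (r s : R) : r <= s -> (nat_above r <= nat_above s)%nat.
Proof.
  intros H. apply nat_above_le_iff. pose proof (nat_above_gt s). lra.
Qed.

Lemma dshift_lt_exp_iff (x y : nat -> nat) (r : R) : 0 <= r ->
  dshift x y < exp (- r) <-> agree (nat_above r) x y.
Proof.
  intros Hr. unfold dshift.
  destruct (excluded_middle_informative _) as [Hdiff|Hsame].
  - destruct (nat_min_spec _ Hdiff) as [Hm Hm_le].
    set (m := nat_min (fun n => x n <> y n)) in *.
    split.
    + intros H. apply exp_lt_inv in H.
      assert (Hm_above : (nat_above r <= m)%nat) by (apply nat_above_le_iff; lra).
      intros i Hi. destruct (Nat.eq_dec (x i) (y i)) as [E|E]; [exact E|].
      specialize (Hm_le i E). lia.
    + intros H. apply exp_increasing.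
      destruct (Compare_dec.le_lt_dec (nat_above r) m) as [Hle|Hlt].
      * apply nat_above_le_iff in Hle. lra.
      * exfalso. exact (Hm (H m Hlt)).
  - split; intros _; [|apply exp_pos].
    intros i _. destruct (Nat.eq_dec (x i) (y i)) as [E|E]; [exact E|].
    exfalso. apply Hsame. exists i. exact E.
Qed.

Lemma iter_shift (j : nat) (x : nat -> nat) (t : nat) : Nat.iter j shift x t = x (j + t)%nat.
Proof.
  revert t; induction j as [|j IH]; intros t; simpl; auto.
  unfold shift at 1. rewrite IH. f_equal. lia.
Qed.

Lemma agree_iter_shift_iff (L i : nat) (x y : nat -> nat) :
  agree L (Nat.iter i shift x) (Nat.iter i shift y) <->
  forall t, (t < L)%nat -> x (i + t)%nat = y (i + t)%nat.
Proof. unfold agree. split; intros H t Ht; specialize (H t Ht); rewrite !iter_shift in *; exact H. Qed.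

Lemma union_of_windows (N : nat -> nat) (n : nat) (P : nat -> Prop) :
  (1 <= n)%nat -> (forall i, (1 <= N i)%nat) ->
  (forall i, (i < n)%nat -> (N i <= N (n - 1))%nat) ->
  (forall i, (i < n)%nat -> forall t, (t < N i)%nat -> P (i + t)%nat) <->
  (forall j, (j < n - 1 + N (n - 1))%nat -> P j).
Proof.
  intros Hn HN Hmono. split.
  - intros H j Hj. destruct (Compare_dec.lt_dec j n) as [Hl|Hl].
    + replace j with (j + 0)%nat by lia. apply (H j Hl 0%nat). specialize (HN j). lia.
    + replace j with (n - 1 + (j - (n - 1)))%nat by lia. apply (H (n - 1)%nat); lia.
  - intros H i Hi t Ht. apply H. specialize (Hmono i Hi). lia.
Qed.

Lemma bowen_ball_shift_iff (n : nat) (eps : R) (x y : nat -> nat) : (1 <= n)%nat -> 0 < eps ->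
  bowen_ball dshift shift n x (exp (- INR n * eps)) y <->
  agree (n - 1 + nat_above (INR n * eps)) x y.
Proof.
  intros Hn Heps.
  assert (Hr : 0 <= INR n * eps) by (apply Rmult_le_pos; [apply pos_INR | lra]).
  rewrite Ropp_mult_distr_l_reverse. unfold bowen_ball, agree.
  rewrite <- (union_of_windows (fun _ => nat_above (INR n * eps)) n (fun i => x i = y i));
    auto using nat_above_pos.
  split; intros H i Hi; specialize (H i Hi);
    [apply agree_iter_shift_iff, dshift_lt_exp_iff | apply dshift_lt_exp_iff, agree_iter_shift_iff];
    assumption.
Qed.

Lemma d_alpha_lt_iff (alpha : R) (n : nat) (x y : nat -> nat) (c : R) : 0 < c ->
  d_alpha dshift shift alpha n x y < c <->
  forall i, (i < n)%nat ->
    exp (alpha * INR i) * dshift (Nat.iter i shift x) (Nat.iter i shift y) < c.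
Proof.
  intros Hc. induction n as [|n IH]; simpl.
  - split; intros; [lia | lra].
  - rewrite Rmax_Rlt, IH. split.
    + intros [Hlt Hn] i Hi. destruct (Nat.eq_dec i n) as [->|Hne]; [exact Hn|].
      apply Hlt. lia.
    + intros H. split; [intros i Hi|]; apply H; lia.
Qed.

Lemma weighted_dshift_lt_iff (alpha : R) (i : nat) (eps : R) (x y : nat -> nat) :
  0 < eps -> 0 <= alpha * INR i - ln eps ->
  exp (alpha * INR i) * dshift x y < eps <-> agree (nat_above (alpha * INR i - ln eps)) x y.
Proof.
  intros Heps Hr. rewrite <- dshift_lt_exp_iff by exact Hr.
  assert (Hexp : exp (alpha * INR i) * exp (- (alpha * INR i - ln eps)) = eps).
  { rewrite <- exp_plus. replace (_ + _) with (ln eps) by ring. apply exp_ln, Heps. }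
  pose proof (exp_pos (alpha * INR i)) as Hweight.
  split; intros H.
  - apply Rmult_lt_reg_l with (exp (alpha * INR i)); [assumption | rewrite Hexp; exact H].
  - rewrite <- Hexp. apply Rmult_lt_compat_l; assumption.
Qed.

Lemma d_alpha_shift_lt_iff (alpha : R) (n : nat) (eps : R) (x y : nat -> nat) :
  (1 <= n)%nat -> 0 < alpha -> 0 < eps < 1 ->
  d_alpha dshift shift alpha n x y < eps <->
  agree (n - 1 + nat_above (alpha * INR (n - 1) - ln eps)) x y.
Proof.
  intros Hn Halpha Heps.
  assert (Hln : ln eps < 0) by (rewrite <- ln_1; apply ln_increasing; lra).
  assert (Hr : forall i, 0 <= alpha * INR i - ln eps).
  { intros i. pose proof (pos_INR i). nra. }
  rewrite d_alpha_lt_iff by lra. unfold agree.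
  rewrite <- (union_of_windows (fun i => nat_above (alpha * INR i - ln eps)) n
                (fun i => x i = y i)); auto using nat_above_pos.
  2:{ intros i Hi. apply nat_above_le.
      assert (INR i <= INR (n - 1)) by (apply le_INR; lia). nra. }
  split; intros H i Hi; specialize (H i Hi);
    [apply agree_iter_shift_iff, weighted_dshift_lt_iff
    | apply weighted_dshift_lt_iff, agree_iter_shift_iff]; auto; lra.
Qed.

Lemma r_bowen_shift (k n : nat) (eps : R) : (1 <= k)%nat -> (1 <= n)%nat -> 0 < eps ->
  r_bowen (Sigma k) dshift shift n (exp (- INR n * eps)) =
  (k ^ (n - 1 + nat_above (INR n * eps)))%nat.
Proof.
  intros hk hn heps. apply min_cylinder_cover_card; [exact hk|].
  intros E. unfold bowen_cover, cylinder_cover.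
  split; intros [HE_Sigma HE_cover]; split; auto;
    intros x Hx; destruct (HE_cover x Hx) as [y [Hy Hxy]]; exists y; split; auto;
    [apply agree_sym | apply agree_sym in Hxy];
    apply bowen_ball_shift_iff; auto.
Qed.

Lemma r_alpha_shift (k : nat) (alpha : R) (n : nat) (eps : R) :
  (1 <= k)%nat -> (1 <= n)%nat -> 0 < alpha -> 0 < eps < 1 ->
  r_alpha (Sigma k) dshift shift alpha n eps =
  (k ^ (n - 1 + nat_above (alpha * INR (n - 1) - ln eps)))%nat.
Proof.
  intros hk hn halpha heps. apply min_cylinder_cover_card; [exact hk|].
  intros E. unfold alpha_spanning, cylinder_cover.
  split; intros [HE_Sigma HE_cover]; split; auto;
    intros x Hx; destruct (HE_cover x Hx) as [y [Hy Hxy]]; exists y; split; auto;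
    apply d_alpha_shift_lt_iff; auto.
Qed.

Lemma is_lim_seq_affine_inv (c d : R) : is_lim_seq (fun n => c + d / INR (S n)) c.
Proof.
  assert (Hinv : is_lim_seq (fun n => / INR n) 0).
  { replace (Finite 0) with (Rbar_inv p_infty) by reflexivity.
    apply is_lim_seq_inv; [apply is_lim_seq_INR | discriminate]. }
  apply is_lim_seq_incr_1, (is_lim_seq_scal_l _ d) in Hinv.
  pose proof (is_lim_seq_plus' _ _ c _ (is_lim_seq_const c) Hinv) as Hsum.
  simpl in Hsum. rewrite Rmult_0_r, Rplus_0_r in Hsum.
  eapply is_lim_seq_ext; [|exact Hsum]. reflexivity.
Qed.

Lemma LimSup_ln_pow_linear (k : nat) (r L : nat -> nat) (c d1 d2 : R) : (1 <= k)%nat ->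
  (forall n, (1 <= n)%nat -> r n = (k ^ L n)%nat) ->
  (forall n, (1 <= n)%nat -> c * INR n + d1 <= INR (L n) <= c * INR n + d2) ->
  LimSup_seq (fun n => / INR n * ln (INR (r n))) = c * ln (INR k).
Proof.
  intros hk Hr HL.
  assert (Hlnk : 0 <= ln (INR k)).
  { rewrite <- ln_1. apply ln_le; [lra|]. apply (le_INR 1 k), hk. }
  apply is_LimSup_seq_unique, is_lim_LimSup_seq, is_lim_seq_incr_1.
  apply is_lim_seq_le_le with (fun n => c * ln (INR k) + d1 * ln (INR k) / INR (S n))
                              (fun n => c * ln (INR k) + d2 * ln (INR k) / INR (S n));
    [|apply is_lim_seq_affine_inv ..].
  intros n. rewrite Hr by lia.
  rewrite pow_INR, ln_pow by (apply (lt_INR 0 k); lia).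
  destruct (HL (S n) ltac:(lia)) as [Hlo Hhi].
  assert (Hn : 0 < INR (S n)) by (apply (lt_INR 0); lia).
  replace (/ INR (S n) * (INR (L (S n)) * ln (INR k)))
    with (c * ln (INR k) + (INR (L (S n)) - c * INR (S n)) * ln (INR k) / INR (S n))
    by (field; lra).
  split; apply Rplus_le_compat_l, Rmult_le_compat_r, Rmult_le_compat_r;
    try (left; apply Rinv_0_lt_compat, Hn); auto; lra.
Qed.

Lemma neutral_entropy_eps_shift (k : nat) (eps : R) : (1 <= k)%nat -> 0 < eps ->
  neutral_entropy_eps (Sigma k) dshift shift eps = (1 + eps) * ln (INR k).
Proof.
  intros hk heps.
  apply (LimSup_ln_pow_linear k _ (fun n => n - 1 + nat_above (INR n * eps))%nat _ (-1) 0 hk).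
  - intros n hn. apply r_bowen_shift; assumption.
  - intros n hn. rewrite plus_INR, minus_INR by exact hn.
    assert (0 <= INR n * eps) by (apply Rmult_le_pos; [apply pos_INR | lra]).
    pose proof (nat_above_bounds (INR n * eps) ltac:(assumption)). simpl. lra.
Qed.

Lemma alpha_entropy_eps_shift (k : nat) (alpha eps : R) :
  (1 <= k)%nat -> 0 < alpha -> 0 < eps < 1 ->
  alpha_entropy_eps (Sigma k) dshift shift alpha eps = (1 + alpha) * ln (INR k).
Proof.
  intros hk halpha heps.
  assert (Hln : ln eps < 0) by (rewrite <- ln_1; apply ln_increasing; lra).
  apply (LimSup_ln_pow_linear k _
           (fun n => n - 1 + nat_above (alpha * INR (n - 1) - ln eps))%nat _
           (- (1 + alpha) - ln eps) (- alpha - ln eps) hk).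
  - intros n hn. apply r_alpha_shift; assumption.
  - intros n hn. rewrite plus_INR, !minus_INR by exact hn.
    assert (0 <= alpha * (INR n - INR 1) - ln eps).
    { pose proof (le_INR 1 n hn). nra. }
    pose proof (nat_above_bounds _ ltac:(eassumption)). simpl in *. lra.
Qed.

(* On [Rbar]-valued functions, [Rbar_locally l] is coerced to the image of [locally l]
   under [Finite]. *)
Lemma filterlim_at_right_0_Finite (F : R -> Rbar) (g : R -> R) (l : R) :
  (forall eps, 0 < eps < 1 -> F eps = Finite (g eps)) ->
  filterlim g (at_right 0) (locally l) -> filterlim F (at_right 0) (Rbar_locally l).
Proof.
  intros HFg Hg. apply (filterlim_ext_loc (fun eps => Finite (g eps))).
  - exists (mkposreal 1 Rlt_0_1). intros eps Heps Hpos. symmetry. apply HFg.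
    change (Rabs (eps - 0) < 1) in Heps. apply Rabs_def2 in Heps. lra.
  - intros P HP. exact (Hg (fun x => P (Finite x)) HP).
Qed.

Lemma filterlim_one_plus_mul_at_right_0 (c : R) :
  filterlim (fun eps => (1 + eps) * c) (at_right 0) (locally c).
Proof.
  assert (Hcont := proj1 (continuity_pt_filterlim (fun eps => (1 + eps) * c) 0) ltac:(reg)).
  simpl in Hcont. rewrite Rplus_0_r, Rmult_1_l in Hcont.
  exact (filterlim_filter_le_1 _ (filter_le_within (F := locally 0) _) Hcont).
Qed.

Theorem mainTheorem13 (k : nat) (hk : (2 <= k)%nat) (alpha : R) (halpha : 0 < alpha) :
  neutral_entropy_is (Sigma k) dshift shift (ln (INR k)) /\
  ln (INR k) < (1 + alpha) * ln (INR k) /\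
  alpha_entropy_is (Sigma k) dshift shift alpha ((1 + alpha) * ln (INR k)).
Proof.
  assert (hk1 : (1 <= k)%nat) by lia.
  assert (Hlnk : 0 < ln (INR k)).
  { rewrite <- ln_1. apply ln_increasing; [lra|]. apply (lt_INR 1 k), hk. }
  split; [|split; [nra|]].
  - apply (filterlim_at_right_0_Finite _ (fun eps => (1 + eps) * ln (INR k))).
    + intros eps Heps. apply neutral_entropy_eps_shift; [exact hk1 | lra].
    + apply filterlim_one_plus_mul_at_right_0.
  - apply (filterlim_at_right_0_Finite _ (fun _ => (1 + alpha) * ln (INR k))).
    + intros eps Heps. apply alpha_entropy_eps_shift; assumption.
    + apply filterlim_const.
Qed.
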